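(* Let $Q=\{0,\dots,n-1\}$ and consider the transition semigroups of minimal complete DFAs with state set $Q$, initial state $0$ and empty state $n-1$ accepting suffix-free languages. For $n=6$, the transition semigroup of maximum cardinality among these is unique and equals $\mathbf{W}_{\mathrm{sf}}(6)$. For $2\le n\le 5$, the transition semigroup of maximum cardinality among these is unique and equals $\mathbf{V}_{\mathrm{sf}}(n)$.
   Context: A language $L$ is suffix-free if whenever $w\in L$ and $u\in L$ with $u$ a suffix of $w$, then $u=w$. Transformations act on the right ($qt$ is the image of $q$ under $t$). The transition semigroup of a DFA is the semigroup of transformations of its state set generated by the transformations induced by its letters. A minimal complete DFA of a suffix-free language with $n\ge2$ states has exactly one empty state (a state from which no final state is reachable), labeled $n-1$. Define $\mathbf{B}_{\mathrm{sf}}(n)=\{t:Q\to Q \mid 0\notin Qt,\ (n-1)t=n-1,\ \text{and for all } j\ge1:\ 0t^j=n-1 \text{ or } 0t^j\neq qt^j \text{ for all } 0<q<n-1\}$, $\mathbf{V}_{\mathrm{sf}}(n)=\{t\in\mathbf{B}_{\mathrm{sf}}(n)\mid \text{for all } p\neq q \text{ in } Q:\ pt=qt=n-1 \text{ or } pt\neq qt\}$, and $\mathbf{W}_{\mathrm{sf}}(n)=\{t\in\mathbf{B}_{\mathrm{sf}}(n)\mid 0t=n-1 \text{ or } qt=n-1 \text{ for all } 1\le q\le n-2\}$. *)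

From mathcomp Require Import all_boot.
Set Implicit Arguments. Unset Strict Implicit. Unset Printing Implicit Defensive.

(* Transformations of Q = 'I_n = {0,...,n-1}; they act on the right: q t = t q. *)
Notation trans n := {ffun 'I_n -> 'I_n}.

(* A complete DFA with state set 'I_n over a finite alphabet; the initial
   state is the state with value 0 (fixed by convention, see [sf_dfa]). *)
Record DFA (n : nat) := mkDFA {
  alph : finType;
  delta : alph -> trans n;
  final : {set 'I_n}
}.

Definition run n (D : DFA n) (q : 'I_n) (w : seq (alph D)) : 'I_n :=
  foldl (fun p a => delta a p) q w.
Arguments run {n} D q w.

Definition accepts n (D : DFA n) (w : seq (alph D)) : Prop :=
  forall p : 'I_n, val p = 0 -> run D p w \in final D.
Arguments accepts {n} D w.

Definition suffix_free n (D : DFA n) : Prop :=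
  forall w u : seq (alph D), accepts D w -> accepts D u -> suffix u w -> u = w.

Definition minimal_dfa n (D : DFA n) : Prop :=
  (forall p q : 'I_n, val p = 0 -> exists w, run D p w = q) /\
  (forall p q : 'I_n, p <> q ->
     exists w, (run D p w \in final D) <> (run D q w \in final D)).

Definition empty_last n (D : DFA n) : Prop :=
  forall (q : 'I_n) w, val q = n.-1 -> run D q w \notin final D.

Definition sf_dfa n (D : DFA n) : Prop :=
  minimal_dfa D /\ empty_last D /\ suffix_free D.

Definition step n (D : DFA n) : rel (trans n) :=
  fun s s' => [exists b : alph D, s' == [ffun q => delta b (s q)]].

(* the transition semigroup: transformations induced by nonempty words *)
Definition tsg n (D : DFA n) : {set trans n} :=
  [set t | [exists a : alph D, connect (@step n D) (delta a) t]].

Definition B_sf n (t : trans n) : Prop :=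
  (forall q, val (t q) <> 0) /\
  (forall q, val q = n.-1 -> val (t q) = n.-1) /\
  (forall j, 0 < j -> forall p : 'I_n, val p = 0 ->
     val (iter j t p) = n.-1 \/
     forall q : 'I_n, 0 < val q < n.-1 -> iter j t p <> iter j t q).

Definition V_sf n (t : trans n) : Prop :=
  B_sf t /\
  forall p q : 'I_n, p <> q ->
    (val (t p) = n.-1 /\ val (t q) = n.-1) \/ t p <> t q.

Definition W_sf n (t : trans n) : Prop :=
  B_sf t /\
  forall p : 'I_n, val p = 0 ->
    val (t p) = n.-1 \/ forall q : 'I_n, 1 <= val q <= n.-2 -> val (t q) = n.-1.

Definition unique_max_tsg n (S : trans n -> Prop) : Prop :=
  exists D0 : DFA n, sf_dfa D0 /\ (forall t, t \in tsg D0 <-> S t) /\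
    forall D : DFA n, sf_dfa D ->
      #|tsg D| <= #|tsg D0| /\
      (#|tsg D| = #|tsg D0| -> forall t, t \in tsg D <-> S t).

From mathcomp Require Import all_boot zify.
Set Implicit Arguments. Unset Strict Implicit. Unset Printing Implicit Defensive.

(* Suffix-freeness forces every t in the transition semigroup to fix the empty
   state n-1, to avoid 0, and, unless 0t = n-1, to separate 0 from every inner
   state 0 < q < n-1.  Join two inner states p, r by an edge when some element
   of the semigroup sends 0 to p and an inner state to r.  Composing with that
   element shows that every t in the semigroup sends p to n-1 or separates p
   from r, and by construction 0t and qt are adjacent whenever both are inner:
   the semigroup consists of transformations compatible with its graph.  An
   exhaustive count over all graphs on the inner states shows that for
   2 <= n <= 6 exactly one graph maximises the number of compatible
   transformations: the empty graph for n = 6, where they form W_sf(6), and the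
   complete graph for n <= 5, where they form V_sf(n).  Conversely the DFA
   whose letters are all those transformations is minimal and suffix-free, so
   the bound is attained. *)

Definition tmul n (t s : trans n) : trans n := [ffun q => s (t q)].

Section TransitionSemigroup.
Variables (n : nat) (D : DFA n).

Definition word_trans (w : seq (alph D)) : trans n := [ffun q => run D q w].

Lemma run_cat q u v : run D q (u ++ v) = run D (run D q u) v.
Proof. by rewrite /run foldl_cat. Qed.

Lemma connect_stepP x y :
  connect (@step n D) x y <-> exists w, y = [ffun q => run D (x q) w].
Proof.
split.
- move/connectP=> [p]; elim: p x => [|s p IH] x /=.
    by move=> _ ->; exists [::]; apply/ffunP=> q; rewrite ffunE.
  move=> /andP[/existsP[b /eqP ->] /IH {}IH /IH[w ->]]; exists (b :: w).
  by apply/ffunP=> q; rewrite !ffunE.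
- move=> [w ->]; elim: w x => [|b w IH] x.
    by rewrite (_ : [ffun q => _] = x) //; apply/ffunP=> q; rewrite ffunE.
  apply: (connect_trans (y := [ffun q => delta b (x q)])).
    by apply: connect1; apply/existsP; exists b.
  have -> : [ffun q => run D (x q) (b :: w)]
            = [ffun q => run D ([ffun q => delta b (x q)] q) w].
    by apply/ffunP=> q; rewrite !ffunE.
  exact: IH.
Qed.

Lemma tsgP t : t \in tsg D <-> exists a w, t = word_trans (a :: w).
Proof.
rewrite inE; split.
- move=> /existsP[a /connect_stepP[w ->]]; exists a, w.
  by apply/ffunP=> q; rewrite !ffunE.
- move=> [a [w ->]]; apply/existsP; exists a; apply/connect_stepP; exists w.
  by apply/ffunP=> q; rewrite !ffunE.
Qed.

Lemma tmul_word_trans u v :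
  tmul (word_trans u) (word_trans v) = word_trans (u ++ v).
Proof. by apply/ffunP=> q; rewrite !ffunE run_cat. Qed.

Lemma tsg_tmul t s : t \in tsg D -> s \in tsg D -> tmul t s \in tsg D.
Proof.
move=> /tsgP[a [w ->]] /tsgP[b [v ->]]; rewrite tmul_word_trans; apply/tsgP.
by exists a, (w ++ b :: v).
Qed.

End TransitionSemigroup.
Arguments word_trans {n} D w.

Section States.
Variable n : nat.
Local Notation N := n.+2.

Definition init : 'I_N := ord0.
Definition sink : 'I_N := ord_max.
Definition inner (q : 'I_N) := (q != init) && (q != sink).

Lemma init_neq_sink : init != sink.
Proof. by rewrite -(inj_eq val_inj). Qed.

Lemma val_eq0 (x : 'I_N) : (val x == 0) = (x == init).
Proof. by rewrite -(inj_eq val_inj). Qed.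

Lemma val_eq_sink (x : 'I_N) : (val x == n.+1) = (x == sink).
Proof. by rewrite -(inj_eq val_inj). Qed.

Lemma innerE (q : 'I_N) : inner q = (0 < q <= n).
Proof.
rewrite /inner -val_eq0 -val_eq_sink; case: q => [[|q] Hq] //=.
by rewrite eqSS ltn_neqAle -ltnS -ltnS Hq andbT.
Qed.

Lemma accepts_init (D : DFA N) w : accepts D w <-> run D init w \in final D.
Proof.
split; first by apply.
by move=> H p /eqP; rewrite val_eq0 => /eqP ->.
Qed.

Definition sf_trans (t : trans N) : Prop :=
  [/\ t sink = sink, forall q, t q != init &
      t init = sink \/ forall q, inner q -> t q != t init].

End States.

Section SuffixFreeDFA.
Variables (n : nat) (D : DFA n.+2).
Hypothesis HD : sf_dfa D.
Local Notation init := (init n).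
Local Notation sink := (sink n).

Lemma reachable q : exists w, run D init w = q.
Proof. by case: HD => [[reach _] _]; apply: reach. Qed.

Lemma distinguishable p q :
  p <> q -> exists w, (run D p w \in final D) <> (run D q w \in final D).
Proof. by case: HD => [[_ dist] _]; apply: dist. Qed.

Lemma run_sink_notin_final w : run D sink w \notin final D.
Proof. by case: HD => [_ [empty _]]; apply: empty. Qed.

Lemma delta_sink (a : alph D) : delta a sink = sink.
Proof.
apply/eqP/negPn/negP => /eqP /distinguishable[w []].
rewrite (negbTE (run_sink_notin_final w)).
by have := run_sink_notin_final (a :: w) => /negbTE.
Qed.

Lemma run_sink w : run D sink w = sink.
Proof. by elim: w => //= a w IH; rewrite delta_sink. Qed.

Lemma coreachable p : p != sink -> exists w, run D p w \in final D.
Proof.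
move=> /eqP /distinguishable[w Hw]; exists w.
by move: Hw; rewrite (negbTE (run_sink_notin_final w)); case: (_ \in _).
Qed.

Lemma suffix_free_nil v u :
  run D init (v ++ u) \in final D -> run D init u \in final D -> v = [::].
Proof.
move=> /accepts_init Hvu /accepts_init Hu; case: HD => [_ [_ sf]].
move: (sf _ _ Hvu Hu (suffix_suffix v u)) => /(congr1 size).
by rewrite size_cat; case: v {Hvu} => //= ? ?; lia.
Qed.

Lemma word_trans_sf (a : alph D) w : sf_trans (word_trans D (a :: w)).
Proof.
set u := a :: w; split; first by rewrite ffunE run_sink.
- move=> q; apply/eqP; rewrite ffunE => Hq.
  have [v Hv] := reachable q; have [x Hx] := coreachable (init_neq_sink n).
  have := @suffix_free_nil (v ++ u) x; rewrite !run_cat Hv Hq => /(_ Hx Hx).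
  by case: v Hv.
- have [->|Hinit] := eqVneq (word_trans D u init) sink; [by left | right].
  move=> q /andP[q_init _]; apply/eqP; rewrite !ffunE => Hq.
  rewrite ffunE in Hinit; have [v Hv] := reachable q; have [x Hx] := coreachable Hinit.
  have := @suffix_free_nil v (u ++ x); rewrite !run_cat Hv Hq => /(_ Hx Hx) v0.
  by move: Hv q_init; rewrite v0 => <-; rewrite eqxx.
Qed.

Lemma tsg_sf_trans t : t \in tsg D -> sf_trans t.
Proof. by move=> /tsgP[a [w ->]]; apply: word_trans_sf. Qed.

End SuffixFreeDFA.

Fixpoint subseqs T (s : seq T) : seq (seq T) :=
  if s is x :: s' then let r := subseqs s' in map (cons x) r ++ r else [:: [::]].

Lemma filter_subseqs (T : eqType) (P : pred T) s : filter P s \in subseqs s.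
Proof.
elim: s => [|x s IH] //=; rewrite mem_cat; case: (P x).
- by rewrite map_f.
- by rewrite IH orbT.
Qed.

(* Graphs on the inner states 1..n are lists of edges (p, r) with p < r. *)
Definition adj (E : seq (nat * nat)) p r := ((p, r) \in E) || ((r, p) \in E).

Section Compatible.
Variable n : nat.
Local Notation N := n.+2.
Local Notation init := (init n).
Local Notation sink := (sink n).

Definition inner_pairs : seq (nat * nat) :=
  [seq pr <- [seq (p, r) | p <- iota 1 n, r <- iota 1 n] | pr.1 < pr.2].

Lemma mem_inner_pairs p r : ((p, r) \in inner_pairs) = [&& 0 < p, p < r & r <= n].
Proof.
rewrite mem_filter /=; apply/andP/idP => [[pr /allpairsP[[a b] /= [pa rb [Ea Eb]]]]|].
  by move: pa rb; rewrite -Ea -Eb !mem_iota !add1n !ltnS pr => /andP[-> _] /andP[_ ->].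
case/and3P => p0 pr rn; split=> //; apply/allpairsP; exists (p, r).
by rewrite !mem_iota !add1n !ltnS p0 rn (leq_trans (ltnW pr) rn) (ltn_trans p0 pr).
Qed.

Lemma adj_inner_pairs p r :
  0 < p <= n -> 0 < r <= n -> adj inner_pairs p r = (p != r).
Proof.
move=> /andP[p0 pn] /andP[r0 rn]; rewrite /adj !mem_inner_pairs p0 r0 pn rn /=.
by case: ltngtP.
Qed.

Definition respects E (t : trans N) : Prop :=
  forall p r, inner p -> inner r -> adj E p r -> t p = sink \/ t p != t r.

Definition collides_in E (t : trans N) : Prop :=
  t init = sink \/ forall q, inner q -> t q = sink \/ adj E (t init) (t q).

Definition compatible E (t : trans N) : Prop :=
  [/\ sf_trans t, respects E t & collides_in E t].

Section DFAGraph.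
Variable D : DFA N.
Hypothesis HD : sf_dfa D.

Definition collide (p r : nat) : bool :=
  [exists t in tsg D, (val (t init) == p) && [exists q, inner q && (val (t q) == r)]].

Definition dfa_graph : seq (nat * nat) :=
  [seq pr <- inner_pairs | collide pr.1 pr.2 || collide pr.2 pr.1].

Lemma mem_dfa_graph p r :
  ((p, r) \in dfa_graph) = (collide p r || collide r p) && ((p, r) \in inner_pairs).
Proof. by rewrite mem_filter. Qed.

(* Composing the witness of the collision with t gives an element of the
   semigroup, to which the suffix-free constraint applies. *)
Lemma collide_separated t (p r : 'I_N) :
  t \in tsg D -> collide p r -> t p = sink \/ t r != t p.
Proof.
move=> Ht /existsP[s /andP[Hs /andP[/eqP sp /existsP[q /andP[Hq /eqP sq]]]]].
have [_ _] := tsg_sf_trans HD (tsg_tmul Hs Ht).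
rewrite !ffunE (val_inj sp) => -[|/(_ q Hq)]; first by left.
by rewrite ffunE (val_inj sq); right.
Qed.

Lemma tsg_respects t : t \in tsg D -> respects dfa_graph t.
Proof.
move=> Ht p r _ _ pr.
have : collide p r || collide r p.
  by case/orP: pr; rewrite mem_dfa_graph => /andP[/orP[] -> _]; rewrite ?orbT.
case/orP=> /(collide_separated Ht).
- by case=> [|]; [left | right; rewrite eq_sym].
- case=> [tr|]; last by right.
  by case: (eqVneq (t p) sink) => [|tp]; [left | right; rewrite tr].
Qed.

Lemma adj_dfa_graph (p r : 'I_N) :
  inner p -> inner r -> p != r -> collide p r -> adj dfa_graph p r.
Proof.
rewrite !innerE -(inj_eq val_inj) => /andP[p0 pn] /andP[r0 rn] pr Hc.
rewrite /adj !mem_dfa_graph Hc orbT /= !mem_inner_pairs p0 r0 pn rn /=.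
by move: pr; case: ltngtP.
Qed.

Lemma tsg_collides_in t : t \in tsg D -> collides_in dfa_graph t.
Proof.
move=> Ht; have [_ t_init] := tsg_sf_trans HD Ht.
case=> [|sep]; first by left.
have [|t0_sink] := eqVneq (t init) sink; [by left | right => q Hq].
have [|tq_sink] := eqVneq (t q) sink; [by left | right].
apply: adj_dfa_graph; rewrite /inner ?t_init //; first by rewrite eq_sym sep.
apply/existsP; exists t; rewrite Ht eqxx /=.
by apply/existsP; exists q; rewrite Hq eqxx.
Qed.

Lemma tsg_compatible t : t \in tsg D -> compatible dfa_graph t.
Proof.
move=> Ht; split; first exact: (tsg_sf_trans HD Ht).
  by apply: tsg_respects.
by apply: tsg_collides_in.
Qed.

End DFAGraph.
End Compatible.

Fixpoint tuples_over T k (vals : seq T) : seq (seq T) :=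
  if k is k'.+1 then [seq x :: s | x <- vals, s <- tuples_over k' vals] else [:: [::]].

Lemma mem_tuples_over (T : eqType) k (vals : seq T) s :
  (s \in tuples_over k vals) = (size s == k) && all (fun x => x \in vals) s.
Proof.
elim: k s => [|k IH] [|x s] //=.
- by apply/negbTE/negP => /allpairsP[[a b] [_ _ /=]].
- apply/allpairsP/idP => [[[a b] [/= Ha Hb [-> ->]]]|].
    by move: Hb; rewrite IH eqSS Ha => /andP[-> ->].
  by rewrite eqSS => /and3P[Hs Hx Ha]; exists (x, s); rewrite /= IH Hs Ha.
Qed.

Lemma uniq_tuples_over (T : eqType) k (vals : seq T) :
  uniq vals -> uniq (tuples_over k vals).
Proof.
move=> Uv; elim: k => [|k IH] //=.
by apply: allpairs_uniq => // [[a b] [c d]] _ _ /= [-> ->].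
Qed.

(* Cardinalities of finite types are locked and do not compute, so for the
   exhaustive count a transformation t of 'I_N is encoded as the list of the
   values of 0t, ..., (N-1)t; the predicates below are the literal
   translations of [sf_trans], [respects] and [collides_in]. *)
Section Encoding.
Variable n : nat.
Local Notation N := n.+2.
Local Notation init := (init n).
Local Notation sink := (sink n).

Definition code (t : trans N) : seq nat := mkseq (fun i => val (t (inord i))) N.
Definition decode (l : seq nat) : trans N := [ffun i : 'I_N => inord (nth 0 l i)].
Definition codes : seq (seq nat) := tuples_over N (iota 0 N).

Definition sf_code (l : seq nat) : bool :=
  [&& nth 0 l n.+1 == n.+1, all (fun q => nth 0 l q != 0) (iota 0 N)
    & (nth 0 l 0 == n.+1) || all (fun q => nth 0 l q != nth 0 l 0) (iota 1 n)].

Definition respects_code E (l : seq nat) : bool :=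
  all (fun p => all (fun r =>
    ~~ adj E p r || (nth 0 l p == n.+1) || (nth 0 l p != nth 0 l r)) (iota 1 n))
  (iota 1 n).

Definition collides_code E (l : seq nat) : bool :=
  (nth 0 l 0 == n.+1) ||
  all (fun q => (nth 0 l q == n.+1) || adj E (nth 0 l 0) (nth 0 l q)) (iota 1 n).

Definition compatible_code E (l : seq nat) : bool :=
  [&& sf_code l, respects_code E l & collides_code E l].

Lemma nth_code t (i : 'I_N) : nth 0 (code t) i = val (t i).
Proof. by rewrite nth_mkseq // inord_val. Qed.

Lemma code_inj : injective code.
Proof. by move=> t s eq_ts; apply/ffunP=> i; apply/val_inj; rewrite -!nth_code eq_ts. Qed.

Lemma code_in_codes t : code t \in codes.
Proof.
rewrite mem_tuples_over size_mkseq eqxx; apply/allP => _ /mapP[i _ ->].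
by rewrite mem_iota ltn_ord.
Qed.

Lemma decodeK l : l \in codes -> code (decode l) = l.
Proof.
rewrite mem_tuples_over => /andP[/eqP size_l /allP l_vals].
apply: (@eq_from_nth _ 0); first by rewrite size_mkseq size_l.
move=> i; rewrite size_mkseq => lt_i_N; rewrite nth_mkseq // ffunE inordK //.
apply: inordK; have := l_vals (nth 0 l i).
by rewrite mem_iota; apply; rewrite mem_nth ?size_l.
Qed.

Lemma all_iota_ordP (P : pred nat) : all P (iota 0 N) <-> forall i : 'I_N, P i.
Proof.
split => [/allP H i|H]; first by apply: H; rewrite mem_iota ltn_ord.
by apply/allP => x; rewrite mem_iota => /= lt_x_N; apply: (H (Ordinal lt_x_N)).
Qed.

Lemma all_iota_innerP (P : pred nat) :
  all P (iota 1 n) <-> forall i : 'I_N, inner i -> P i.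
Proof.
split => [/allP H i|H].
  by rewrite innerE => i_inner; apply: H; rewrite mem_iota add1n ltnS.
apply/allP => x; rewrite mem_iota add1n ltnS => /andP[x0 xn].
have lt_x_N : x < N by rewrite ltnS ltnW.
by apply: (H (Ordinal lt_x_N)); rewrite innerE x0.
Qed.

Lemma sf_codeP t : sf_code (code t) <-> sf_trans t.
Proof.
rewrite /sf_code (nth_code t init) (nth_code t sink) val_eq_sink; split.
- move=> /and3P[/eqP t_sink /all_iota_ordP t_init sep]; split.
  + exact: t_sink.
  + by move=> q; have := t_init q; rewrite nth_code val_eq0.
  + case/orP: sep => [|/all_iota_innerP sep]; first by left; apply/eqP.
    by right=> q /sep; rewrite nth_code (inj_eq val_inj).
- case=> t_sink t_init sep; rewrite t_sink eqxx /=; apply/andP; split.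
    by apply/all_iota_ordP => i; rewrite nth_code val_eq0.
  case: sep => [->|sep]; rewrite ?eqxx //; apply/orP; right.
  by apply/all_iota_innerP => q /sep; rewrite nth_code (inj_eq val_inj).
Qed.

Lemma respects_codeP E t : respects_code E (code t) <-> respects E t.
Proof.
split.
- move=> /all_iota_innerP Ht p r Hp Hr pr.
  move/all_iota_innerP: (Ht p Hp) => /(_ r Hr).
  rewrite pr !nth_code val_eq_sink (inj_eq val_inj) /= => /orP[/eqP|]; by [left | right].
- move=> Ht; apply/all_iota_innerP => p Hp; apply/all_iota_innerP => r Hr.
  rewrite !nth_code val_eq_sink (inj_eq val_inj).
  by case: (boolP (adj E p r)) => //= /(Ht p r Hp Hr) [->|->]; rewrite ?eqxx ?orbT.
Qed.

Lemma collides_codeP E t : collides_code E (code t) <-> collides_in E t.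
Proof.
rewrite /collides_code (nth_code t init) val_eq_sink; split.
- case/orP=> [/eqP|/all_iota_innerP Ht]; [by left | right=> q /Ht].
  by rewrite nth_code val_eq_sink => /orP[/eqP|]; [left | right].
- case=> [->|Ht]; rewrite ?eqxx //; apply/orP; right.
  apply/all_iota_innerP => q /Ht; rewrite nth_code val_eq_sink.
  by case=> [->|->]; rewrite ?eqxx ?orbT.
Qed.

Lemma compatible_codeP E t : compatible_code E (code t) <-> compatible E t.
Proof.
rewrite /compatible_code; split.
  by case/and3P=> /sf_codeP ? /respects_codeP ? /collides_codeP.
by case=> /sf_codeP -> /respects_codeP -> /collides_codeP ->.
Qed.

Lemma uniq_compatible_codes E : uniq (filter (compatible_code E) codes).
Proof. by rewrite filter_uniq // uniq_tuples_over // iota_uniq. Qed.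

Lemma uniq_map_code (A : {set trans N}) : uniq (map code (enum A)).
Proof. by rewrite map_inj_uniq ?enum_uniq //; exact: code_inj. Qed.

Lemma map_code_sub_compatible E (A : {set trans N}) :
  (forall t, t \in A -> compatible E t) ->
  {subset map code (enum A) <= filter (compatible_code E) codes}.
Proof.
move=> A_compat _ /mapP[t At ->]; rewrite mem_filter code_in_codes andbT.
by apply/compatible_codeP/A_compat; rewrite -mem_enum.
Qed.

Lemma card_le_count_compatible E (A : {set trans N}) :
  (forall t, t \in A -> compatible E t) -> #|A| <= count (compatible_code E) codes.
Proof.
move=> A_compat; rewrite cardE -(size_map code) -size_filter.
exact: uniq_leq_size (uniq_map_code A) (map_code_sub_compatible A_compat).
Qed.

Lemma count_compatible_le_card E (A : {set trans N}) :
  (forall t, compatible E t -> t \in A) -> count (compatible_code E) codes <= #|A|.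
Proof.
move=> compat_A; rewrite cardE -(size_map code) -size_filter.
apply: uniq_leq_size (uniq_compatible_codes E) _ => l.
rewrite mem_filter => /andP[l_compat l_code]; rewrite -(decodeK l_code) in l_compat *.
by apply: map_f; rewrite mem_enum; apply/compat_A/compatible_codeP.
Qed.

Lemma compatible_sub_of_card E (A : {set trans N}) :
  (forall t, t \in A -> compatible E t) -> #|A| = count (compatible_code E) codes ->
  forall t, compatible E t -> t \in A.
Proof.
move=> A_compat cardA t /compatible_codeP t_compat.
have le_size : size (filter (compatible_code E) codes) <= size (map code (enum A)).
  by rewrite size_map -cardE cardA size_filter.
have sub_compat := map_code_sub_compatible A_compat.
have [_ /(_ (code t))] := uniq_min_size (uniq_map_code A) sub_compat le_size.
by rewrite mem_filter t_compat code_in_codes (mem_map code_inj) mem_enum => ->.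
Qed.

End Encoding.

Section Construction.
Variables (n : nat) (S : {pred trans n.+2}).
Local Notation N := n.+2.
Local Notation init := (init n).
Local Notation sink := (sink n).

(* The final state of the constructed DFA; for n = 0 it coincides with [init]. *)
Definition last_inner : 'I_N := inord n.

Definition from_init (q : 'I_N) : trans N :=
  [ffun x => if x == init then q else sink].
Definition to_last (p : 'I_N) : trans N :=
  [ffun x => if x == p then last_inner else sink].

Hypothesis S_sf : forall t, t \in S -> sf_trans t.
Hypothesis S_tmul : forall t s, t \in S -> s \in S -> tmul t s \in S.
Hypothesis S_from_init : forall q, q != init -> from_init q \in S.
Hypothesis S_to_last : forall p, p != sink -> n != 0 -> to_last p \in S.

Definition dfa_of : DFA N :=
  {| alph := {t | t \in S}; delta := fun a => val a; final := [set last_inner] |}.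

Lemma last_inner_neq_sink : last_inner != sink.
Proof. by rewrite -val_eq_sink /= inordK // ltn_eqF. Qed.

Lemma word_trans_dfa_of (a : alph dfa_of) w : word_trans dfa_of (a :: w) \in S.
Proof.
elim: w a => [|b w IH] a.
  by rewrite (_ : word_trans _ _ = val a) ?(valP a) //; apply/ffunP => x; rewrite ffunE.
rewrite -cat1s -tmul_word_trans; apply: S_tmul (IH b).
by rewrite (_ : word_trans _ _ = val a) ?(valP a) //; apply/ffunP => x; rewrite ffunE.
Qed.

Lemma tsg_dfa_of t : t \in tsg dfa_of = (t \in S).
Proof.
apply/idP/idP => [/tsgP[a [w ->]]|St]; first exact: word_trans_dfa_of.
apply/tsgP; exists (exist _ t St : alph dfa_of), [::].
by apply/ffunP => x; rewrite ffunE.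
Qed.

Lemma run_dfa_of_sink w : run dfa_of sink w = sink.
Proof. by elim: w => //= a w IH; have [->] := S_sf (valP a). Qed.

Lemma dfa_of_reachable q : exists w, run dfa_of init w = q.
Proof.
have [->|q_init] := eqVneq q init; first by exists [::].
exists [:: exist _ (from_init q) (S_from_init q_init) : alph dfa_of].
by rewrite /= ffunE eqxx.
Qed.

Lemma dfa_of_distinguishable p q : p <> q ->
  exists w, (run dfa_of p w \in final dfa_of) <> (run dfa_of q w \in final dfa_of).
Proof.
wlog p_sink : p q / p != sink.
  move=> gen pq; have [p_sink|p_sink] := eqVneq p sink; last exact: gen.
  have [w Hw] : exists w,
      (run dfa_of q w \in final dfa_of) <> (run dfa_of p w \in final dfa_of).
    by apply: gen => [|qp]; [rewrite -p_sink; apply/eqP => /esym | apply: pq].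
  by exists w => /esym.
move=> /eqP pq; have [p_last|p_last] := eqVneq p last_inner.
  by exists [::]; rewrite /= !inE -p_last eqxx eq_sym (negbTE pq).
have [q_last|q_last] := eqVneq q last_inner.
  by exists [::]; rewrite /= !inE -q_last eqxx (negbTE pq).
have n0 : n != 0.
  apply: contraNneq pq => n0; apply/eqP/val_inj; move: p_last q_last.
  rewrite -!(inj_eq val_inj) /= inordK //; have := ltn_ord p; have := ltn_ord q.
  lia.
exists [:: exist _ (to_last p) (S_to_last p_sink n0) : alph dfa_of].
rewrite /= !ffunE eqxx eq_sym (negbTE pq) !inE eqxx.
by rewrite eq_sym (negbTE last_inner_neq_sink).
Qed.

Lemma dfa_of_empty_last : empty_last dfa_of.
Proof.
move=> q w /eqP; rewrite val_eq_sink => /eqP ->.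
by rewrite run_dfa_of_sink inE eq_sym last_inner_neq_sink.
Qed.

Lemma dfa_of_suffix_free : suffix_free dfa_of.
Proof.
move=> w u /accepts_init w_acc /accepts_init u_acc /suffixP[[|b v] w_eq] //.
move: w_acc; rewrite {}w_eq run_cat inE => /eqP v_last; exfalso.
set q := run dfa_of init (b :: v) in v_last.
have [_ /(_ init) q_init _] := S_sf (word_trans_dfa_of b v).
rewrite ffunE -/q in q_init.
have q_sink : q != sink.
  apply: contra_eq_neq v_last => ->.
  by rewrite run_dfa_of_sink eq_sym last_inner_neq_sink.
case: u u_acc v_last => [|c u]; rewrite inE => /eqP u_last.
  by rewrite /= in u_last * => q_last; move: q_init; rewrite q_last -u_last eqxx.
have [_ _ [|/(_ q)]] := S_sf (word_trans_dfa_of c u); rewrite !ffunE u_last.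
  by move/eqP; rewrite (negbTE last_inner_neq_sink).
by rewrite /inner q_init q_sink => /(_ isT) /eqP.
Qed.

Lemma dfa_of_sf : sf_dfa dfa_of.
Proof.
split; last by split; [exact: dfa_of_empty_last | exact: dfa_of_suffix_free].
split; last exact: dfa_of_distinguishable.
by move=> p q /eqP; rewrite val_eq0 => /eqP ->; exact: dfa_of_reachable.
Qed.

End Construction.

Definition max_graph_check n k E0 : bool :=
  let sf_codes := filter (sf_code n) (codes n) in
  all (fun E => let c := count (compatible_code n E) sf_codes in
                (c <= k) && ((c == k) == (E == E0)))
      (subseqs (inner_pairs n)).

Lemma count_compatible_sf_codes n E :
  count (compatible_code n E) (filter (sf_code n) (codes n)) =
  count (compatible_code n E) (codes n).
Proof.
rewrite count_filter; apply: eq_count => l.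
by rewrite /= /compatible_code; case: (sf_code n l); rewrite ?andbF ?andbT.
Qed.

Lemma max_graph_checkP n k E0 E :
  max_graph_check n k E0 -> E \in subseqs (inner_pairs n) ->
  count (compatible_code n E) (codes n) <= k /\
  (count (compatible_code n E) (codes n) = k <-> E = E0).
Proof.
move=> /allP check /check /=; rewrite count_compatible_sf_codes => /andP[-> /eqP c_k].
split=> //.
split=> [ck|E_E0]; apply/eqP; first by rewrite -c_k; apply/eqP.
by move: c_k; rewrite E_E0 eqxx.
Qed.

Lemma tsg_card_of_check n k E0 (D : DFA n.+2) :
  max_graph_check n k E0 -> sf_dfa D ->
  #|tsg D| <= k /\ (#|tsg D| = k -> forall t, t \in tsg D <-> compatible E0 t).
Proof.
move=> check D_sf; have tsg_D_compat := tsg_compatible D_sf.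
have [count_D D_max] := max_graph_checkP check (filter_subseqs _ _ : dfa_graph D \in _).
have card_D := card_le_count_compatible tsg_D_compat.
split=> [|card_k t]; first exact: leq_trans card_D count_D.
have count_k : count (compatible_code n (dfa_graph D)) (codes n) = k.
  by apply/eqP; rewrite eqn_leq count_D -card_k card_D.
rewrite -(proj1 D_max count_k); split; first exact: tsg_D_compat.
by apply: compatible_sub_of_card; rewrite ?card_k.
Qed.

Lemma unique_max_tsg_of_check n (P : trans n.+2 -> Prop) E0 k :
  max_graph_check n k E0 -> E0 \in subseqs (inner_pairs n) ->
  (forall t, P t <-> compatible E0 t) ->
  (forall t s, P t -> P s -> P (tmul t s)) ->
  (forall q, q != init n -> P (from_init q)) ->
  (forall p, p != sink n -> n != 0 -> P (to_last p)) ->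
  unique_max_tsg P.
Proof.
move=> check E0_graph P_compat P_tmul P_from_init P_to_last.
pose S := [pred t : trans n.+2 | compatible_code n E0 (code t)].
have S_P t : t \in S <-> P t.
  by rewrite inE; split=> [/compatible_codeP/P_compat|/P_compat/compatible_codeP].
have S_sf t : t \in S -> sf_trans t by move=> /S_P /P_compat [].
have S_tmul t s : t \in S -> s \in S -> tmul t s \in S.
  by move=> /S_P Pt /S_P Ps; apply/S_P; apply: P_tmul.
have S_from_init q : q != init n -> from_init q \in S by move=> /P_from_init /S_P.
have S_to_last p : p != sink n -> n != 0 -> to_last p \in S.
  by move=> p_sink n0; apply/S_P; apply: P_to_last.
have tsg_D0 t : t \in tsg (dfa_of S) <-> P t by rewrite tsg_dfa_of //; apply: S_P.
have [_ [_ /(_ erefl) count_E0]] := max_graph_checkP check E0_graph.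
have card_D0 : #|tsg (dfa_of S)| = k.
  rewrite -count_E0; apply/eqP; rewrite eqn_leq; apply/andP; split.
    by apply: card_le_count_compatible => t /tsg_D0 /P_compat.
  by apply: count_compatible_le_card => t /P_compat /tsg_D0.
exists (dfa_of S); split; first exact: dfa_of_sf S_sf S_tmul S_from_init S_to_last.
split=> // D D_sf; rewrite card_D0.
have [card_D card_D_eq] := tsg_card_of_check check D_sf.
by split=> // card_k t; rewrite P_compat; apply: card_D_eq.
Qed.

Section WandV.
Variable n : nat.
Local Notation N := n.+2.
Local Notation init := (init n).
Local Notation sink := (sink n).

Lemma iter_sink (t : trans N) k : t sink = sink -> iter k t sink = sink.
Proof. by move=> t_sink; elim: k => //= k ->. Qed.

Lemma B_sf_sf_trans (t : trans N) : B_sf t -> sf_trans t.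
Proof.
case=> t_init [t_sink t_iter]; split.
- by apply/val_inj/t_sink.
- by move=> q; rewrite -val_eq0; apply/eqP.
- case: (t_iter 1 isT init erefl) => [/eqP|sep].
    by rewrite val_eq_sink => /eqP; left.
  by right=> q; rewrite innerE => q_inner; apply/eqP => /esym; apply: sep; rewrite ltnS.
Qed.

Lemma B_sf_intro (t : trans N) :
  t sink = sink -> (forall q, t q != init) ->
  (forall j, 0 < j -> iter j t init = sink \/
     forall q, inner q -> iter j t init != iter j t q) ->
  B_sf t.
Proof.
move=> t_sink t_init t_iter; split; first by move=> q /eqP; rewrite val_eq0; apply/negP.
split; first by move=> q /eqP; rewrite val_eq_sink => /eqP ->; rewrite t_sink.
move=> j j0 p /eqP; rewrite val_eq0 => /eqP ->.
case: (t_iter j j0) => [->|sep]; [by left | right=> q q_inner].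
by apply/eqP; apply: sep; rewrite innerE -ltnS.
Qed.

Lemma compatible_nilP (t : trans N) :
  compatible [::] t <-> sf_trans t /\ (t init = sink \/ forall q, inner q -> t q = sink).
Proof.
split=> [[t_sf _ t_coll]|[t_sf t_W]]; split=> //.
- by case: t_coll => [|t_inner]; [left | right=> q /t_inner[]].
- by case: t_W => [|t_W]; [left | right=> q /t_W; left].
Qed.

Lemma W_sfP (t : trans N) : W_sf t <-> compatible [::] t.
Proof.
rewrite compatible_nilP; split.
- case=> t_B t_W; split; first exact: B_sf_sf_trans.
  case: (t_W init erefl) => [/eqP|t_inner]; first by rewrite val_eq_sink => /eqP; left.
  by right=> q; rewrite innerE => /t_inner /eqP; rewrite val_eq_sink => /eqP.
- case=> -[t_sink t_init _] t_W; split; last first.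
    move=> p /eqP; rewrite val_eq0 => /eqP ->.
    case: t_W => [->|t_W]; [by left | right=> q q_inner].
    by apply/eqP; rewrite val_eq_sink t_W ?innerE.
  apply: B_sf_intro => // j j0.
  have [t0|t0] := eqVneq (t init) sink.
    by left; rewrite -(prednK j0) iterSr t0 iter_sink.
  case: t_W => [t0'|t_W]; first by rewrite t0' eqxx in t0.
  case: j j0 => [|[|j]] // _; first by right=> q /t_W /= ->.
  by left; rewrite !iterSr (t_W (t init)) ?iter_sink // /inner t_init t0.
Qed.

Lemma compatible_nil_intro (t : trans N) :
  t sink = sink -> (forall q, t q != init) ->
  (t init = sink \/ forall q, inner q -> t q = sink) -> compatible [::] t.
Proof.
move=> t_sink t_init t_W; apply/compatible_nilP; split=> //; split=> //.
case: t_W => [|t_W]; first by left.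
have [|t0] := eqVneq (t init) sink; [by left | right=> q /t_W ->].
by rewrite eq_sym.
Qed.

Lemma compatible_nil_tmul (t s : trans N) :
  compatible [::] t -> compatible [::] s -> compatible [::] (tmul t s).
Proof.
move=> /compatible_nilP[[t_sink _ _] t_W] /compatible_nilP[[s_sink s_init _] _].
apply: compatible_nil_intro => [|q|]; rewrite ?ffunE ?t_sink //.
by case: t_W => [t0|t_W]; [left | right=> q q_inner]; rewrite ?ffunE ?t0 ?t_W.
Qed.

Lemma from_init_neq_init (q x : 'I_N) : q != init -> from_init q x != init.
Proof. by move=> q_init; rewrite ffunE; case: ifP; rewrite // eq_sym init_neq_sink. Qed.

Lemma to_last_neq_init (p x : 'I_N) : n != 0 -> to_last p x != init.
Proof.
move=> n0; rewrite ffunE; case: ifP; rewrite ?(eq_sym sink) ?init_neq_sink //.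
by rewrite -val_eq0 /= inordK.
Qed.

Lemma from_init_sink (q : 'I_N) : from_init q sink = sink.
Proof. by rewrite ffunE eq_sym (negbTE (init_neq_sink n)). Qed.

Lemma to_last_sink (p : 'I_N) : p != sink -> to_last p sink = sink.
Proof. by move=> p_sink; rewrite ffunE eq_sym (negbTE p_sink). Qed.

Lemma compatible_nil_from_init (q : 'I_N) : q != init -> compatible [::] (from_init q).
Proof.
move=> q_init; apply: compatible_nil_intro; rewrite ?from_init_sink //.
  by move=> x; apply: from_init_neq_init.
by right=> x /andP[x_init _]; rewrite ffunE (negbTE x_init).
Qed.

Lemma compatible_nil_to_last (p : 'I_N) :
  p != sink -> n != 0 -> compatible [::] (to_last p).
Proof.
move=> p_sink n0; apply: compatible_nil_intro; rewrite ?to_last_sink //.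
  by move=> x; apply: to_last_neq_init.
have [->|p_init] := eqVneq p init.
  by right=> x /andP[x_init _]; rewrite ffunE (negbTE x_init).
by left; rewrite ffunE eq_sym (negbTE p_init).
Qed.

Definition pinjective (t : trans N) : Prop :=
  forall u v, u <> v -> t u = sink \/ t u <> t v.

Definition sf_pinjective (t : trans N) : Prop :=
  [/\ t sink = sink, forall q, t q != init & pinjective t].

Lemma pinjective_iter (t : trans N) j u v : t sink = sink -> pinjective t ->
  u <> v -> iter j t u = sink \/ iter j t u <> iter j t v.
Proof.
move=> t_sink t_pinj uv; elim: j => [|j]; first by right.
by rewrite !iterS => -[->|]; [left | apply: t_pinj].
Qed.

Lemma V_sfP (t : trans N) : V_sf t <-> sf_pinjective t.
Proof.
split.
- case=> /B_sf_sf_trans[t_sink t_init _] t_V; split=> // u v /t_V [[t_u _]|].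
    by left; apply/eqP; rewrite -val_eq_sink t_u.
  by right.
- case=> t_sink t_init t_pinj; split.
    apply: B_sf_intro => // j _.
    have [|t0] := eqVneq (iter j t init) sink; [by left | right=> q /andP[q_init _]].
    have [|] := pinjective_iter j t_sink t_pinj (nesym (elimN eqP q_init)).
      by move/eqP; rewrite (negbTE t0).
    by move/eqP.
  move=> p q /t_pinj [t_p|]; last by right.
  have [t_q|t_q] := eqVneq (t q) sink; first by left; rewrite t_p t_q.
  by right; rewrite t_p; apply/eqP; rewrite eq_sym.
Qed.

Lemma sf_pinjective_tmul (t s : trans N) :
  sf_pinjective t -> sf_pinjective s -> sf_pinjective (tmul t s).
Proof.
move=> [t_sink t_init t_pinj] [s_sink s_init s_pinj].
split=> [|q|u v /t_pinj]; rewrite !ffunE ?t_sink //.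
by case=> [->|]; [left | apply: s_pinj].
Qed.

Lemma sf_pinjective_from_init (q : 'I_N) : q != init -> sf_pinjective (from_init q).
Proof.
move=> q_init; split=> [|x|u v uv]; rewrite ?from_init_sink ?from_init_neq_init //.
rewrite !ffunE; have [u_init|] := eqVneq u init; last by left.
have [v_init|_] := eqVneq v init; first by rewrite -v_init in u_init.
by have [|] := eqVneq q sink; [left | right; apply/eqP].
Qed.

Lemma sf_pinjective_to_last (p : 'I_N) :
  p != sink -> n != 0 -> sf_pinjective (to_last p).
Proof.
move=> p_sink n0; split=> [|x|u v uv]; rewrite ?to_last_sink ?to_last_neq_init //.
rewrite !ffunE; have [u_p|] := eqVneq u p; last by left.
have [v_p|_] := eqVneq v p; first by rewrite -v_p in u_p.
by right; apply/eqP/last_inner_neq_sink.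
Qed.

Lemma sf_pinjective_compatible (t : trans N) :
  sf_pinjective t -> compatible (inner_pairs n) t.
Proof.
move=> [t_sink t_init t_pinj].
have sep q : inner q -> t init = sink \/ t q != t init.
  move=> /andP[/eqP q_init _]; case: (t_pinj q init q_init) => [t_q|/eqP]; last by right.
  by have [|] := eqVneq (t init) sink; [left | right; rewrite t_q eq_sym].
split.
- split=> //; have [|t0] := eqVneq (t init) sink; [by left | right=> q /sep[t0'|//]].
  by rewrite t0' eqxx in t0.
- move=> p r p_inner r_inner; rewrite adj_inner_pairs -?innerE // (inj_eq val_inj).
  by move=> /eqP /t_pinj [|/eqP]; [left | right].
- have [|t0] := eqVneq (t init) sink; [by left | right=> q q_inner].
  have [|tq] := eqVneq (t q) sink; [by left | right].
  case: (sep q q_inner) => [t0'|]; first by rewrite t0' eqxx in t0.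
  by rewrite adj_inner_pairs -?innerE /inner ?t_init ?t0 ?tq // (inj_eq val_inj) eq_sym.
Qed.

Lemma compatible_pinjective (t : trans N) :
  compatible (inner_pairs n) t -> pinjective t.
Proof.
move=> [[t_sink t_init sep] t_resp _] u v /eqP uv.
have [->|u_sink] := eqVneq u sink; first by left.
have t_u_sink_or_neq : t u = sink \/ t u <> sink.
  by have [|/eqP] := eqVneq (t u) sink; [left | right].
have [->|v_sink] := eqVneq v sink; first by rewrite t_sink.
have [u_init|u_init] := eqVneq u init.
  case: sep => [t0|sep]; [by left; rewrite u_init | right; rewrite u_init].
  by apply/eqP; rewrite eq_sym sep // /inner v_sink andbT -u_init eq_sym.
have [v_init|v_init] := eqVneq v init.
  case: sep => [t0|sep]; first by rewrite v_init t0.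
  by right; rewrite v_init; apply/eqP; rewrite sep // /inner u_init.
have [u_inner v_inner] : inner u /\ inner v by rewrite /inner u_init u_sink v_init.
case: (t_resp u v u_inner v_inner) => [||/eqP]; [|by left | by right].
by rewrite adj_inner_pairs -?innerE // (inj_eq val_inj).
Qed.

Lemma compatible_inner_pairsP (t : trans N) :
  compatible (inner_pairs n) t <-> sf_pinjective t.
Proof.
split; last exact: sf_pinjective_compatible.
move=> t_compat; have [[t_sink t_init _] _ _] := t_compat.
by split=> //; apply: compatible_pinjective.
Qed.

End WandV.

Lemma W_sf_unique_max n k : max_graph_check n k [::] -> unique_max_tsg (@W_sf n.+2).
Proof.
move=> check; apply: (unique_max_tsg_of_check check).
- by have := filter_subseqs pred0 (inner_pairs n); rewrite filter_pred0.
- exact: W_sfP.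
- by move=> t s /W_sfP t_W /W_sfP s_W; apply/W_sfP/compatible_nil_tmul.
- by move=> q /compatible_nil_from_init /W_sfP.
- by move=> p p_sink n0; apply/W_sfP/compatible_nil_to_last.
Qed.

Lemma V_sf_unique_max n k :
  max_graph_check n k (inner_pairs n) -> unique_max_tsg (@V_sf n.+2).
Proof.
move=> check; apply: (unique_max_tsg_of_check check).
- by have := filter_subseqs predT (inner_pairs n); rewrite filter_predT.
- by move=> t; apply: iff_trans (V_sfP t) (iff_sym (compatible_inner_pairsP t)).
- by move=> t s /V_sfP t_V /V_sfP s_V; apply/V_sfP/sf_pinjective_tmul.
- by move=> q /sf_pinjective_from_init /V_sfP.
- by move=> p p_sink n0; apply/V_sfP/sf_pinjective_to_last.
Qed.

(* 629 = |W_sf(6)| and 1, 3, 13, 73 = |V_sf(n)| for n = 2, ..., 5. *)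
Theorem theorem3 :
  unique_max_tsg (@W_sf 6) /\
  (forall n, 2 <= n <= 5 -> unique_max_tsg (@V_sf n)).
Proof.
split; first by apply: (@W_sf_unique_max 4 629); vm_compute.
case=> [|[|[|[|[|[|n]]]]]] //= _.
- by apply: (@V_sf_unique_max 0 1); vm_compute.
- by apply: (@V_sf_unique_max 1 3); vm_compute.
- by apply: (@V_sf_unique_max 2 13); vm_compute.
- by apply: (@V_sf_unique_max 3 73); vm_compute.
Qed.
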